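(* Let $\mathfrak{A}_m(W)(s,E_m,Q_m,Q_n)$ be the annihilating operator of the colored Jones polynomial of the Whitehead link defined in the context, and let $\varepsilon_s$ denote evaluation at $s=1$ (after which $E_m,Q_m,Q_n$ commute). Then \[\varepsilon_s\mathfrak{A}_m(W)(s,E_m,Q_m,Q_n)=-\frac{1}{(1+Q_m^2)^2Q_m^2Q_n^2}(E_m+1)(E_m-Q_m^2)A^{\mathrm{Lk}}_m(W)(E_m,Q_m,Q_n),\] where $A^{\mathrm{Lk}}_m(W)(E_m,Q_m,Q_n)=Q_m^4Q_n^2E_m^3+(Q_m^4Q_n^4-Q_m^2Q_n^4+Q_m^4-2Q_m^2Q_n^2-Q_m^2+Q_n^2)E_m^2+(Q_m^4Q_n^2-Q_m^2Q_n^4-2Q_m^2Q_n^2+Q_n^4-Q_m^2+1)E_m+Q_n^2.$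
   Context: $s$ is an indeterminate. Work in the algebra of polynomials in $E_m$ with coefficients in $\mathbb{Q}(s,Q_m,Q_n)$ written on the left, with $E_m\,p(s,Q_m,Q_n)=p(s,sQ_m,Q_n)\,E_m$ (the composition rule for $(E_mf)(m,n)=f(m+1,n)$, $(Q_mf)(m,n)=s^mf(m,n)$, $(Q_nf)(m,n)=s^nf(m,n)$). Put $\Phi_k(Q_m)=1-s^kQ_m^4$ and $u_1=\frac{1}{\Phi_6(Q_m)}E_m-\frac{s^2Q_m^2}{\Phi_2(Q_m)}$, $v_1=\frac{s^2Q_m^2}{\Phi_6(Q_m)}E_m-\frac{1}{\Phi_2(Q_m)}$, $u_2=\frac{s^{12}Q_m^4}{\Phi_{10}(Q_m)\Phi_{12}(Q_m)}E_m^2-\frac{s^4(1+s^2)Q_m^2}{\Phi_6(Q_m)\Phi_{10}(Q_m)}E_m+\frac{1}{\Phi_4(Q_m)\Phi_6(Q_m)}$, $v_2=\frac{1}{\Phi_{10}(Q_m)\Phi_{12}(Q_m)}E_m^2-\frac{s^2(1+s^2)Q_m^2}{\Phi_6(Q_m)\Phi_{10}(Q_m)}E_m+\frac{s^4Q_m^4}{\Phi_4(Q_m)\Phi_6(Q_m)}$, $Y=u_2u_1(E_m-s^2Q_m^2)$, $P^0_W(s,E_m,Q_m,Q_n)=(s^2-s^4)u_2v_1(Q_m^2E_m-1)+s^2(Q_n^2+1+Q_n^{-2})u_2u_1(Q_m^2E_m-1)+s^2u_2u_1(s^2Q_m^2+s^{-2}Q_m^{-2})(Q_m^2E_m-1)+(s^2-s^4)u_2(Q_m^2E_m-1)-Y(Q_m^2Q_n^2+Q_m^2Q_n^{-2}+3+Q_m^{-2}Q_n^2+Q_m^{-2}Q_n^{-2})+s^{-2}(Q_n^2-s^2+Q_n^{-2})v_2v_1(E_m-s^2Q_m^2)+s^{-2}v_2v_1(s^2Q_m^2+s^{-2}Q_m^{-2})(E_m-s^2Q_m^2)+(s^{-4}-s^{-2})v_2Q_m^{-2}(E_m-s^2Q_m^2)-s^{-4}v_2u_1(E_m-s^2Q_m^2)$,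 $P^1_W(s,E_m,Q_m)=(E_m+1)\frac{(1-s^2Q_m^2)(1-s^6Q_m^2)}{1+s^4Q_m^2}$, and $\mathfrak{A}_m(W)=P^1_W(s,sE_m,Q_m)P^0_W(s,sE_m,Q_m,Q_n)$ (substitute $sE_m$ for $E_m$). Here $\varepsilon_s$ sends a left-normalized expression $\sum_k c_k(s,Q_m,Q_n)E_m^k$ to the commutative polynomial $\sum_k c_k(1,Q_m,Q_n)E_m^k$. *)

From HB Require Import structures.
From mathcomp Require Import all_boot all_order all_algebra.
From mathcomp Require Import generic_quotient fraction.
From mathcomp Require Import mpoly.
Set Implicit Arguments.
Unset Strict Implicit.
Unset Printing Implicit Defensive.
Import Order.TTheory GRing.Theory Num.Theory.
Local Open Scope ring_scope.
Local Notation "x %:F" := (@tofrac _ x) .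
Arguments tofrac {R}.

(* Polynomial ring Q[s, Q_m, Q_n]: variable 0 = s, 1 = Q_m, 2 = Q_n. *)
Definition Rp := {mpoly rat[3]}.
Definition K := {fraction Rp}.

Definition i0 : 'I_3 := @Ordinal 3 0 isT.
Definition i1 : 'I_3 := @Ordinal 3 1 isT.
Definition i2 : 'I_3 := @Ordinal 3 2 isT.

Definition sR : Rp := 'X_i0.
Definition QmR : Rp := 'X_i1.
Definition QnR : Rp := 'X_i2.

Definition sigmaR (p : Rp) : Rp := comp_mpoly [tuple sR; sR * QmR; QnR] p.
Definition eps1R (p : Rp) : Rp := comp_mpoly [tuple 1; QmR; QnR] p.

(* sigma extended to the fraction field (well defined since sigmaR is an
   injective ring endomorphism; here defined through a representative). *)
Definition sigmaK (x : K) : K :=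
  let r := repr x in (sigmaR (\n_r))%:F / (sigmaR (\d_r))%:F.

Definition s : K := sR%:F.
Definition Qm : K := QmR%:F.
Definition Qn : K := QnR%:F.

(* Ore algebra K[E_m; sigma]: an element sum_k c_k E_m^k (coefficients on
   the left) is stored as the polynomial sum_k c_k 'X^k in {poly K};
   multiplication is the skew product E_m c = sigma(c) E_m. *)
Definition skmul (p q : {poly K}) : {poly K} :=
  \sum_(i < size p) p`_i *: ('X^i * map_poly (iter i sigmaK) q).

Notation "p ** q" := (skmul p q) (at level 40, left associativity).

Definition Em : {poly K} := 'X.
Definition c (x : K) : {poly K} := x%:P.

(* substitution E_m |-> s E_m (s is central) *)
Definition subsE (p : {poly K}) : {poly K} := \poly_(i < size p) (p`_i * s ^+ i).

Definition Phi (k : nat) (x : K) : K := 1 - s ^+ k * x ^+ 4.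

Definition u1 : {poly K} :=
  c (Phi 6 Qm)^-1 ** Em - c (s ^+ 2 * Qm ^+ 2 / Phi 2 Qm).
Definition v1 : {poly K} :=
  c (s ^+ 2 * Qm ^+ 2 / Phi 6 Qm) ** Em - c (Phi 2 Qm)^-1.
Definition u2 : {poly K} :=
  c (s ^+ 12 * Qm ^+ 4 / (Phi 10 Qm * Phi 12 Qm)) ** Em ** Em
  - c (s ^+ 4 * (1 + s ^+ 2) * Qm ^+ 2 / (Phi 6 Qm * Phi 10 Qm)) ** Em
  + c (Phi 4 Qm * Phi 6 Qm)^-1.
Definition v2 : {poly K} :=
  c (Phi 10 Qm * Phi 12 Qm)^-1 ** Em ** Em
  - c (s ^+ 2 * (1 + s ^+ 2) * Qm ^+ 2 / (Phi 6 Qm * Phi 10 Qm)) ** Em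
  + c (s ^+ 4 * Qm ^+ 4 / (Phi 4 Qm * Phi 6 Qm)).

Definition Y : {poly K} := u2 ** u1 ** (Em - c (s ^+ 2 * Qm ^+ 2)).

Definition P0W : {poly K} :=
    c (s ^+ 2 - s ^+ 4) ** u2 ** v1 ** (c (Qm ^+ 2) ** Em - 1)
  + c (s ^+ 2 * (Qn ^+ 2 + 1 + Qn ^- 2)) ** u2 ** u1 ** (c (Qm ^+ 2) ** Em - 1)
  + c (s ^+ 2) ** u2 ** u1 ** c (s ^+ 2 * Qm ^+ 2 + s ^- 2 * Qm ^- 2)
      ** (c (Qm ^+ 2) ** Em - 1)
  + c (s ^+ 2 - s ^+ 4) ** u2 ** (c (Qm ^+ 2) ** Em - 1)
  - Y ** c (Qm ^+ 2 * Qn ^+ 2 + Qm ^+ 2 * Qn ^- 2 + 3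
            + Qm ^- 2 * Qn ^+ 2 + Qm ^- 2 * Qn ^- 2)
  + c (s ^- 2 * (Qn ^+ 2 - s ^+ 2 + Qn ^- 2)) ** v2 ** v1
      ** (Em - c (s ^+ 2 * Qm ^+ 2))
  + c (s ^- 2) ** v2 ** v1 ** c (s ^+ 2 * Qm ^+ 2 + s ^- 2 * Qm ^- 2)
      ** (Em - c (s ^+ 2 * Qm ^+ 2))
  + c (s ^- 4 - s ^- 2) ** v2 ** c (Qm ^- 2) ** (Em - c (s ^+ 2 * Qm ^+ 2))
  - c (s ^- 4) ** v2 ** u1 ** (Em - c (s ^+ 2 * Qm ^+ 2)).

Definition P1W : {poly K} :=
  (Em + 1) ** c ((1 - s ^+ 2 * Qm ^+ 2) * (1 - s ^+ 6 * Qm ^+ 2)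
                 / (1 + s ^+ 4 * Qm ^+ 2)).

Definition AmW : {poly K} := subsE P1W ** subsE P0W.

Definition eps_s_coef (x v : K) : Prop :=
  exists n d : Rp, eps1R d != 0 /\ x = n%:F / d%:F
                   /\ v = (eps1R n)%:F / (eps1R d)%:F.

(* epsilon_s on an operator sum_k c_k E_m^k, landing in the commutative
   polynomial ring K[E_m] (coefficients free of s). *)
Definition eps_s (P V : {poly K}) : Prop := forall k, eps_s_coef P`_k V`_k.

Definition ALkW : {poly K} :=
    (Qm ^+ 4 * Qn ^+ 2) *: 'X^3
  + (Qm ^+ 4 * Qn ^+ 4 - Qm ^+ 2 * Qn ^+ 4 + Qm ^+ 4 - 2 * Qm ^+ 2 * Qn ^+ 2
     - Qm ^+ 2 + Qn ^+ 2) *: 'X^2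
  + (Qm ^+ 4 * Qn ^+ 2 - Qm ^+ 2 * Qn ^+ 4 - 2 * Qm ^+ 2 * Qn ^+ 2 + Qn ^+ 4
     - Qm ^+ 2 + 1) *: 'X
  + (Qn ^+ 2)%:P.

(** [eps_s] is compatible with sums and with the skew product: on coefficients
it is evaluation at s = 1, and the twist [sigmaK] disappears there because
Q_m |-> s Q_m does not change values at s = 1; for the same reason the
substitution E_m |-> s E_m is invisible. Hence [eps_s AmW] is the commutative
product of the s = 1 images of [P1W] and [P0W], themselves assembled from those
of u_1, v_1, u_2, v_2. What remains is an identity between explicit polynomials
in E_m over a field of characteristic 0, checked by [field] at every evaluation
point. *)

From mathcomp Require Import all_boot all_order all_algebra.
From mathcomp Require Import generic_quotient fraction.
From mathcomp Require Import mpoly.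
From mathcomp Require Import ring.
Set Implicit Arguments.
Unset Strict Implicit.
Unset Printing Implicit Defensive.
Import GRing.Theory.
Local Open Scope ring_scope.
Local Notation "x %:F" := (@tofrac _ x).

Lemma pchar0_natr_inj (F : fieldType) :
  [pchar F] =i pred0 -> injective (fun n : nat => n%:R : F).
Proof.
move/pcharf0P => F0; suff le_nat i j : i%:R = j%:R :> F -> (i <= j)%N.
  by move=> i j ij; apply/eqP; rewrite eqn_leq !le_nat.
case: (leqP i j) => // lt_ji /eqP.
by rewrite -subr_eq0 -natrB ?(ltnW lt_ji) // F0 subn_eq0 leqNgt lt_ji.
Qed.

Lemma pchar0_poly_eq (F : fieldType) (p q : {poly F}) :
  [pchar F] =i pred0 -> (forall x, p.[x] = q.[x]) -> p = q.
Proof.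
move=> F0 pq; apply/eqP; rewrite -subr_eq0; apply/eqP.
apply: (@roots_geq_poly_eq0 _ _ [seq i%:R | i <- iota 0 (size (p - q))]).
- by apply/allP => x _; rewrite /root !hornerE pq subrr.
- by rewrite map_inj_uniq ?iota_uniq //; apply: pchar0_natr_inj.
- by rewrite size_map size_iota.
Qed.

Lemma sum_ord_widen (V : nmodType) n m (F : nat -> V) :
  (n <= m)%N -> (forall i, (n <= i)%N -> F i = 0) ->
  \sum_(i < n) F i = \sum_(i < m) F i.
Proof.
move=> le_nm F0; rewrite -!(big_mkord xpredT) (@big_cat_nat _ _ _ n 0 m) //.
by rewrite /= [X in _ + X]big_nat_cond [X in _ + X]big1 ?addr0 // => i /andP[/andP[/F0]].
Qed.

Lemma tofrac_repr (R : idomainType) (x : {fraction R}) :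
  x = (\n_(repr x))%:F / (\d_(repr x))%:F.
Proof.
apply: (@mulIf _ (\d_(repr x))%:F); first by rewrite tofrac_eq0 denom_ratioP.
rewrite mulfVK ?tofrac_eq0 ?denom_ratioP // -{1}[x]reprK.
unlock tofrac; rewrite !piE; apply/eqmodP.
rewrite /= FracField.equivfE /FracField.mulf.
by rewrite !numden_Ratio ?mulf_neq0 ?oner_neq0 ?denom_ratioP // !mulr1 mulrC.
Qed.

Definition shift_mnm (m : 'X_{1..3}) : 'X_{1..3} :=
  [multinom if i == i0 then (m i0 + m i1)%N else m i | i < 3].

Lemma shift_mnm_inj : injective shift_mnm.
Proof.
move=> m1 m2 /mnmP e; apply/mnmP => -[[|[|[|//]]] i_lt3].
- have -> : Ordinal i_lt3 = i0 by exact: val_inj.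
  by have := e i0; have := e i1; rewrite !mnmE /= => ->; apply: addIn.
- have -> : Ordinal i_lt3 = i1 by exact: val_inj.
  by have := e i1; rewrite !mnmE.
- have -> : Ordinal i_lt3 = i2 by exact: val_inj.
  by have := e i2; rewrite !mnmE.
Qed.

Lemma sigmaR_mpolyX m : sigmaR 'X_[m] = 'X_[shift_mnm m].
Proof.
rewrite /sigmaR comp_mpolyX [RHS]mpolyXE_id !big_ord_recl !big_ord0.
have -> : (ord0 : 'I_3) = i0 by exact: val_inj.
have -> : lift i0 ord0 = i1 by exact: val_inj.
have -> : lift i0 (lift ord0 ord0) = i2 by exact: val_inj.
rewrite !mnmE !(tnth_nth 0) /= /sR /QmR /QnR exprMn exprD.
ring.
Qed.

Lemma mcoeff_sigmaR p m : (sigmaR p)@_(shift_mnm m) = p@_m.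
Proof.
elim/mpolyind: p => [|a m' p _ _ IHp]; first by rewrite /sigmaR rmorph0 !mcoeff0.
rewrite /sigmaR rmorphD /= comp_mpolyZ -!/(sigmaR _) sigmaR_mpolyX.
by rewrite !mcoeffD !mcoeffZ IHp !mcoeffX (inj_eq shift_mnm_inj).
Qed.

Lemma sigmaR_eq0 p : (sigmaR p == 0) = (p == 0).
Proof.
apply/eqP/eqP => [sp0|->]; last by rewrite /sigmaR rmorph0.
by apply/mpolyP => m; rewrite -mcoeff_sigmaR sp0 !mcoeff0.
Qed.

(* [sigmaK] is computed on a representative; injectivity of [sigmaR] makes it
   agree with any other fraction representing the same element. *)
Lemma sigmaK_frac n d :
  d != 0 -> sigmaK (n%:F / d%:F) = (sigmaR n)%:F / (sigmaR d)%:F.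
Proof.
move=> d_neq0; rewrite /sigmaK; set r := repr _.
have r_d_neq0 := denom_ratioP r.
have : (\n_r)%:F / (\d_r)%:F = n%:F / d%:F by rewrite -tofrac_repr.
move/eqP; rewrite eqr_div ?tofrac_eq0 // -!tofracM tofrac_eq => /eqP r_eq.
apply/eqP; rewrite eqr_div ?tofrac_eq0 ?sigmaR_eq0 // -!tofracM tofrac_eq.
by rewrite /sigmaR -!rmorphM r_eq.
Qed.

Lemma eps1R0 : eps1R 0 = 0.
Proof. by rewrite /eps1R rmorph0. Qed.

Lemma eps1R1 : eps1R 1 = 1.
Proof. by rewrite /eps1R rmorph1. Qed.

Lemma eps1RD : {morph eps1R : p q / p + q}.
Proof. by move=> p q; rewrite /eps1R rmorphD. Qed.

Lemma eps1RN : {morph eps1R : p / - p}.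
Proof. by move=> p; rewrite /eps1R rmorphN. Qed.

Lemma eps1RM : {morph eps1R : p q / p * q}.
Proof. by move=> p q; rewrite /eps1R rmorphM. Qed.

Lemma eps1R_sigmaR p : eps1R (sigmaR p) = eps1R p.
Proof.
elim/mpolyind: p => [|a m p _ _ IHp]; first by rewrite /sigmaR rmorph0.
rewrite /sigmaR rmorphD /= comp_mpolyZ -!/(sigmaR _) sigmaR_mpolyX !eps1RD IHp.
rewrite /eps1R !comp_mpolyZ !comp_mpolyX; congr (_ *: _ + _).
by rewrite !big_ord_recl !big_ord0 !(tnth_nth 0) /= !mnmE /= !expr1n.
Qed.

Lemma eps1R_neq0 d : eps1R d != 0 -> d != 0.
Proof. by apply: contraNneq => ->; rewrite eps1R0. Qed.

Lemma eps_s_coef_tofrac p : eps_s_coef p%:F (eps1R p)%:F.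
Proof. by exists p, 1; rewrite eps1R1 oner_neq0 tofrac1 !divr1. Qed.

(* Some rewrites under [eps_s_coef] (e.g. with [coefC]) trigger very slow
   conversions between [K] and the carrier of [{fraction Rp}]; transporting
   along equalities avoids them. *)
Lemma eps_s_coef_eq {x v x' v'} :
  x = x' -> v = v' -> eps_s_coef x v -> eps_s_coef x' v'.
Proof. by move=> <- <-. Qed.

Lemma eps_s_coef0 : eps_s_coef 0 0.
Proof. by have := eps_s_coef_tofrac 0; rewrite eps1R0 tofrac0. Qed.

Lemma eps_s_coef1 : eps_s_coef 1 1.
Proof. by have := eps_s_coef_tofrac 1; rewrite eps1R1 tofrac1. Qed.

Lemma eps_s_coefD {x y v w} :
  eps_s_coef x v -> eps_s_coef y w -> eps_s_coef (x + y) (v + w).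
Proof.
move=> [n [d [d1_neq0 [-> ->]]]] [n' [d' [d1'_neq0 [-> ->]]]].
exists (n * d' + n' * d), (d * d'); rewrite eps1RD !eps1RM.
split; first exact: mulf_neq0.
by rewrite !tofracD !tofracM; split; rewrite addf_div // tofrac_eq0 // eps1R_neq0.
Qed.

Lemma eps_s_coefN {x v} : eps_s_coef x v -> eps_s_coef (- x) (- v).
Proof.
move=> [n [d [d1_neq0 [-> ->]]]]; exists (- n), d.
by rewrite eps1RN !tofracN !mulNr.
Qed.

Lemma eps_s_coefM {x y v w} :
  eps_s_coef x v -> eps_s_coef y w -> eps_s_coef (x * y) (v * w).
Proof.
move=> [n [d [d1_neq0 [-> ->]]]] [n' [d' [d1'_neq0 [-> ->]]]].
exists (n * n'), (d * d'); rewrite !eps1RM.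
by split; [exact: mulf_neq0 | rewrite !tofracM !mulf_div].
Qed.

Lemma eps_s_coefV {x v} : eps_s_coef x v -> v != 0 -> eps_s_coef x^-1 v^-1.
Proof.
move=> [n [d [d1_neq0 [-> ->]]]] v_neq0; exists d, n.
by rewrite !invf_div; split=> //; apply: contraNneq v_neq0 => ->; rewrite tofrac0 mul0r.
Qed.

Lemma eps_s_coefX {x v} k : eps_s_coef x v -> eps_s_coef (x ^+ k) (v ^+ k).
Proof.
move=> xv; elim: k => [|k IHk]; first exact: eps_s_coef1.
by rewrite !exprS; apply: eps_s_coefM.
Qed.

Lemma eps_s_coef_nat k : eps_s_coef k%:R k%:R.
Proof.
elim: k => [|k IHk]; first exact: eps_s_coef0.
by rewrite mulrS; apply: eps_s_coefD eps_s_coef1 IHk.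
Qed.

Lemma eps_s_coef_sigmaK {x v} : eps_s_coef x v -> eps_s_coef (sigmaK x) v.
Proof.
move=> [n [d [d1_neq0 [-> ->]]]]; exists (sigmaR n), (sigmaR d).
by rewrite !eps1R_sigmaR sigmaK_frac // eps1R_neq0.
Qed.

Lemma eps_s_coef_s : eps_s_coef s 1.
Proof. by have := eps_s_coef_tofrac sR; rewrite /eps1R comp_mpolyXU tofrac1. Qed.

Lemma eps_s_coef_Qm : eps_s_coef Qm Qm.
Proof. by have := eps_s_coef_tofrac QmR; rewrite /eps1R comp_mpolyXU. Qed.

Lemma eps_s_coef_Qn : eps_s_coef Qn Qn.
Proof. by have := eps_s_coef_tofrac QnR; rewrite /eps1R comp_mpolyXU. Qed.

Lemma eps_s_coef_sX k : eps_s_coef (s ^+ k) 1.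
Proof. by have := eps_s_coefX k eps_s_coef_s; rewrite expr1n. Qed.

Lemma eps_s_coef_sXV k : eps_s_coef (s ^- k) 1.
Proof. by have := eps_s_coefV (eps_s_coef_sX k) (oner_neq0 _); rewrite invr1. Qed.

Lemma eps_s_coef_sXM k y w : eps_s_coef y w -> eps_s_coef (s ^+ k * y) w.
Proof. by move=> yw; have := eps_s_coefM (eps_s_coef_sX k) yw; rewrite mul1r. Qed.

Lemma eps_s_coef_sXVM k y w : eps_s_coef y w -> eps_s_coef (s ^- k * y) w.
Proof. by move=> yw; have := eps_s_coefM (eps_s_coef_sXV k) yw; rewrite mul1r. Qed.

Lemma eps_s_coef_sum (I : Type) (r : seq I) (F G : I -> K) :
  (forall i, eps_s_coef (F i) (G i)) ->
  eps_s_coef (\sum_(i <- r) F i) (\sum_(i <- r) G i).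
Proof.
move=> FG; elim: r => [|i r IHr]; first by rewrite !big_nil; exact: eps_s_coef0.
by rewrite !big_cons; apply: eps_s_coefD.
Qed.

Lemma iter_sigmaK0 i : iter i sigmaK 0 = 0.
Proof.
elim: i => [|i /= ->] //.
by have := @sigmaK_frac 0 1 (oner_neq0 _); rewrite /sigmaR !rmorph0 !mul0r.
Qed.

Lemma coef_skmul p q k :
  (p ** q)`_k = \sum_(i < k.+1) p`_i * iter i sigmaK q`_(k - i).
Proof.
pose G i := p`_i * (if (k < i)%N then 0 else iter i sigmaK q`_(k - i)).
transitivity (\sum_(i < size p) G i).
  rewrite coef_sum; apply: eq_bigr => i _.
  by rewrite coefZ coefXnM coef_map_id0 ?iter_sigmaK0.
transitivity (\sum_(i < k.+1) G i); last first.
  by apply: eq_bigr => i _; rewrite /G ltnNge -ltnS ltn_ord.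
rewrite (@sum_ord_widen _ (size p) (size p + k.+1) G (leq_addr _ _)); last first.
  by move=> i le_pi; rewrite /G nth_default ?mul0r.
rewrite [RHS](@sum_ord_widen _ k.+1 (size p + k.+1) G (leq_addl _ _)) // => i lt_ki.
by rewrite /G lt_ki mulr0.
Qed.

Lemma eps_s_coef_iter_sigmaK {x v} j :
  eps_s_coef x v -> eps_s_coef (iter j sigmaK x) v.
Proof. by move=> xv; elim: j => //= j; apply: eps_s_coef_sigmaK. Qed.

Lemma eps_sM p q v w : eps_s p v -> eps_s q w -> eps_s (p ** q) (v * w).
Proof.
move=> pv qw k; rewrite coef_skmul coefM; apply: eps_s_coef_sum => i.
exact/eps_s_coefM/eps_s_coef_iter_sigmaK.
Qed.

Lemma eps_sD p q v w : eps_s p v -> eps_s q w -> eps_s (p + q) (v + w).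
Proof. by move=> pv qw k; rewrite !coefD; exact: eps_s_coefD (pv k) (qw k). Qed.

Lemma eps_sN p v : eps_s p v -> eps_s (- p) (- v).
Proof. by move=> pv k; rewrite !coefN; exact: eps_s_coefN (pv k). Qed.

Lemma eps_sC x v : eps_s_coef x v -> eps_s (c x) v%:P.
Proof.
move=> xv k.
apply: (eps_s_coef_eq (x := if k == 0%N then x else 0)
                      (v := if k == 0%N then v else 0)).
- by rewrite /c coefC.
- by rewrite coefC.
by case: (k == 0)%N; [exact: xv | exact: eps_s_coef0].
Qed.

Lemma eps_s1 : eps_s 1 1.
Proof.
by move=> k; apply: eps_s_coef_eq _ _ (eps_s_coef_nat (k == 0)%N); rewrite coef1.
Qed.

Lemma eps_s_Em : eps_s Em 'X.
Proof.
by move=> k; apply: eps_s_coef_eq _ _ (eps_s_coef_nat (k == 1)%N); rewrite coefX.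
Qed.

Lemma eps_s_subsE p v : eps_s p v -> eps_s (subsE p) v.
Proof.
move=> pv k; rewrite /subsE coef_poly; case: ltnP => [_|le_pk].
  have := eps_s_coefM (pv k) (eps_s_coefX k eps_s_coef_s).
  by apply: eps_s_coef_eq; rewrite // expr1n mulr1.
by apply: eps_s_coef_eq _ _ (pv k); rewrite // nth_default.
Qed.

Lemma eps_s_eq {p v w} : eps_s p v -> v = w -> eps_s p w.
Proof. by move=> pv <-. Qed.

Section AtSEqualsOne.

Variables (F : fieldType) (a b : F).

(* Every Phi_k(Q_m) specialises to [phi_s1] at s = 1. *)
Definition phi_s1 : F := 1 - a ^+ 4.

Definition u1_s1 : {poly F} := (phi_s1^-1)%:P * 'X - (a ^+ 2 / phi_s1)%:P.
Definition v1_s1 : {poly F} := (a ^+ 2 / phi_s1)%:P * 'X - (phi_s1^-1)%:P.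
Definition u2_s1 : {poly F} :=
    (a ^+ 4 / (phi_s1 * phi_s1))%:P * 'X * 'X
  - (2 * a ^+ 2 / (phi_s1 * phi_s1))%:P * 'X + ((phi_s1 * phi_s1)^-1)%:P.
Definition v2_s1 : {poly F} :=
    ((phi_s1 * phi_s1)^-1)%:P * 'X * 'X
  - (2 * a ^+ 2 / (phi_s1 * phi_s1))%:P * 'X + (a ^+ 4 / (phi_s1 * phi_s1))%:P.

(* [P0W] at s = 1, term by term: the coefficients s^2 - s^4 and s^-4 - s^-2
   become 1 - 1. *)
Definition P0W_s1 : {poly F} :=
    (1 - 1)%:P * u2_s1 * v1_s1 * ((a ^+ 2)%:P * 'X - 1)
  + (b ^+ 2 + 1 + b ^- 2)%:P * u2_s1 * u1_s1 * ((a ^+ 2)%:P * 'X - 1)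
  + 1%:P * u2_s1 * u1_s1 * (a ^+ 2 + a ^- 2)%:P * ((a ^+ 2)%:P * 'X - 1)
  + (1 - 1)%:P * u2_s1 * ((a ^+ 2)%:P * 'X - 1)
  - u2_s1 * u1_s1 * ('X - (a ^+ 2)%:P)
      * (a ^+ 2 * b ^+ 2 + a ^+ 2 / b ^+ 2 + 3 + a ^- 2 * b ^+ 2 + a ^- 2 / b ^+ 2)%:P
  + (b ^+ 2 - 1 + b ^- 2)%:P * v2_s1 * v1_s1 * ('X - (a ^+ 2)%:P)
  + 1%:P * v2_s1 * v1_s1 * (a ^+ 2 + a ^- 2)%:P * ('X - (a ^+ 2)%:P)
  + (1 - 1)%:P * v2_s1 * (a ^- 2)%:P * ('X - (a ^+ 2)%:P)
  - 1%:P * v2_s1 * u1_s1 * ('X - (a ^+ 2)%:P).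

Definition P1W_s1 : {poly F} :=
  ('X + 1) * ((1 - a ^+ 2) * (1 - a ^+ 2) / (1 + a ^+ 2))%:P.

Definition ALk : {poly F} :=
    (a ^+ 4 * b ^+ 2) *: 'X^3
  + (a ^+ 4 * b ^+ 4 - a ^+ 2 * b ^+ 4 + a ^+ 4 - 2 * a ^+ 2 * b ^+ 2
     - a ^+ 2 + b ^+ 2) *: 'X^2
  + (a ^+ 4 * b ^+ 2 - a ^+ 2 * b ^+ 4 - 2 * a ^+ 2 * b ^+ 2 + b ^+ 4
     - a ^+ 2 + 1) *: 'X
  + (b ^+ 2)%:P.

Lemma P1W_s1_mul_P0W_s1 :
  [pchar F] =i pred0 -> a != 0 -> b != 0 -> 1 + a ^+ 2 != 0 -> phi_s1 != 0 ->
  P1W_s1 * P0W_s1 =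
  - ((1 + a ^+ 2) ^+ 2 * a ^+ 2 * b ^+ 2)^-1 *: (('X + 1) * ('X - (a ^+ 2)%:P) * ALk).
Proof.
move=> F0 a_neq0 b_neq0 a2_neq0 phi_s1_neq0; apply: pchar0_poly_eq => // x.
rewrite /phi_s1 in phi_s1_neq0.
rewrite /P1W_s1 /P0W_s1 /u1_s1 /v1_s1 /u2_s1 /v2_s1 /ALk /phi_s1 -polyC1.
rewrite !(hornerD, hornerN, hornerM, hornerC, hornerX, hornerXn, hornerZ); field.
by rewrite a_neq0 b_neq0 a2_neq0 phi_s1_neq0.
Qed.

End AtSEqualsOne.

Lemma tofrac_neq0_at (v : 'I_3 -> rat) (p : Rp) : meval v p != 0 -> p%:F != 0.
Proof. by rewrite tofrac_eq0; apply: contraNneq => ->; rewrite meval0. Qed.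

Lemma Qm_neq0 : Qm != 0.
Proof. by apply: (tofrac_neq0_at (v := fun=> 2%:R)); rewrite mevalXU. Qed.

Lemma Qn_neq0 : Qn != 0.
Proof. by apply: (tofrac_neq0_at (v := fun=> 2%:R)); rewrite mevalXU. Qed.

Lemma oneDQm2_neq0 : 1 + Qm ^+ 2 != 0.
Proof.
rewrite /Qm -tofrac1 -tofracXn -tofracD; apply: (tofrac_neq0_at (v := fun=> 2%:R)).
by rewrite mevalD meval1 rmorphXn /= mevalXU.
Qed.

Lemma phi_s1_Qm_neq0 : phi_s1 Qm != 0.
Proof.
rewrite /phi_s1 /Qm -tofrac1 -tofracXn -tofracB.
apply: (tofrac_neq0_at (v := fun=> 2%:R)).
by rewrite mevalB meval1 rmorphXn /= mevalXU.
Qed.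

Lemma pchar_K : [pchar K] =i pred0.
Proof.
apply/pcharf0P => n; rewrite -(rmorph_nat (@tofrac Rp)) tofrac_eq0.
by rewrite -(rmorph_nat (@mpolyC 3 rat)) mpolyC_eq0 Num.Theory.pnatr_eq0.
Qed.

(* The tactics below compute the value of [eps_s] syntactically; the [_s1]
   definitions are written in exactly the form they produce, so [reflexivity]
   closes the comparisons. *)
Ltac eps_s_coef_neq0 :=
  lazymatch goal with
  | |- is_true (_ * _ != 0) => apply: mulf_neq0; eps_s_coef_neq0
  | |- is_true (_ ^+ _ != 0) => apply: expf_neq0; eps_s_coef_neq0
  | |- is_true (1 - Qm ^+ 4 != 0) => exact: phi_s1_Qm_neq0
  | |- is_true (1 + Qm ^+ 2 != 0) => exact: oneDQm2_neq0
  | |- is_true (Qm != 0) => exact: Qm_neq0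
  | |- is_true (Qn != 0) => exact: Qn_neq0
  end.

Ltac eps_s_coef_tac :=
  lazymatch goal with
  | |- eps_s_coef (s ^+ _ * _) _ => apply: eps_s_coef_sXM; eps_s_coef_tac
  | |- eps_s_coef (s ^- _ * _) _ => apply: eps_s_coef_sXVM; eps_s_coef_tac
  | |- eps_s_coef (s ^+ _) _ => exact: eps_s_coef_sX
  | |- eps_s_coef (s ^- _) _ => exact: eps_s_coef_sXV
  | |- eps_s_coef (_ + _) _ => apply: eps_s_coefD; eps_s_coef_tac
  | |- eps_s_coef (- _) _ => apply: eps_s_coefN; eps_s_coef_tac
  | |- eps_s_coef (_ * _) _ => apply: eps_s_coefM; eps_s_coef_tac
  | |- eps_s_coef (_ ^+ _) _ => apply: eps_s_coefX; eps_s_coef_tac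
  | |- eps_s_coef (_ ^-1) _ => apply: eps_s_coefV; [eps_s_coef_tac | eps_s_coef_neq0]
  | |- eps_s_coef Qm _ => exact: eps_s_coef_Qm
  | |- eps_s_coef Qn _ => exact: eps_s_coef_Qn
  | |- eps_s_coef 1 _ => exact: eps_s_coef1
  | |- eps_s_coef (_ %:R) _ => exact: eps_s_coef_nat
  | |- eps_s_coef (Phi _ _) _ => rewrite /Phi; eps_s_coef_tac
  end.

Ltac eps_s_tac_with leaf :=
  lazymatch goal with
  | |- eps_s (_ ** _) _ => apply: eps_sM; eps_s_tac_with leaf
  | |- eps_s (_ + _) _ => apply: eps_sD; eps_s_tac_with leaf
  | |- eps_s (- _) _ => apply: eps_sN; eps_s_tac_with leaf
  | |- eps_s (c _) _ => apply: eps_sC; eps_s_coef_tac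
  | |- eps_s Em _ => exact: eps_s_Em
  | |- eps_s 1 _ => exact: eps_s1
  | _ => leaf
  end.

Ltac eps_s_tac := eps_s_tac_with fail.

Lemma eps_s_u1 : eps_s u1 (u1_s1 Qm).
Proof. eapply eps_s_eq; [rewrite /u1; eps_s_tac | reflexivity]. Qed.

Lemma eps_s_v1 : eps_s v1 (v1_s1 Qm).
Proof. eapply eps_s_eq; [rewrite /v1; eps_s_tac | reflexivity]. Qed.

Lemma eps_s_u2 : eps_s u2 (u2_s1 Qm).
Proof. eapply eps_s_eq; [rewrite /u2; eps_s_tac | reflexivity]. Qed.

Lemma eps_s_v2 : eps_s v2 (v2_s1 Qm).
Proof. eapply eps_s_eq; [rewrite /v2; eps_s_tac | reflexivity]. Qed.

Lemma eps_s_P1W : eps_s P1W (P1W_s1 Qm).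
Proof. eapply eps_s_eq; [rewrite /P1W; eps_s_tac | reflexivity]. Qed.

Lemma eps_s_P0W : eps_s P0W (P0W_s1 Qm Qn).
Proof.
eapply eps_s_eq.
  (* [idtac;] delays the match until [leaf] is reached. *)
  rewrite /P0W /Y; eps_s_tac_with
    ltac:(idtac; lazymatch goal with
          | |- eps_s u1 _ => exact: eps_s_u1
          | |- eps_s v1 _ => exact: eps_s_v1
          | |- eps_s u2 _ => exact: eps_s_u2
          | |- eps_s v2 _ => exact: eps_s_v2
          end).
reflexivity.
Qed.

Theorem mainTheorem3 :
  eps_s AmW
    ((- ((1 + Qm ^+ 2) ^+ 2 * Qm ^+ 2 * Qn ^+ 2)^-1) *:
       (('X + 1) * ('X - (Qm ^+ 2)%:P) * ALkW)).
Proof.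
eapply eps_s_eq.
  rewrite /AmW; apply: eps_sM; apply: eps_s_subsE.
  - exact: eps_s_P1W.
  - exact: eps_s_P0W.
exact: P1W_s1_mul_P0W_s1 pchar_K Qm_neq0 Qn_neq0 oneDQm2_neq0 phi_s1_Qm_neq0.
Qed.
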